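(* Let $\lambda=(\lambda_1\ge\dots\ge\lambda_N)$ be a dominant coweight of $\operatorname{GL}(N)$, $|\lambda|=\sum_i\lambda_i$, $n(\lambda)=\sum_{i=1}^N(i-1)\lambda_i$. Consider the power series $$P_\lambda(t)=\sum_{\vec\lambda}t^{2\Delta(\lambda,\vec\lambda)}\prod_{j=1}^{N-1}P_{\operatorname{GL}(N-j)}(t;\lambda^j),$$ summed over tuples $\vec\lambda=(\lambda^1,\dots,\lambda^{N-1})$ with $\lambda^j$ a dominant coweight of $\operatorname{GL}(N-j)$, where, with $\lambda^0:=\lambda$, $$2\Delta(\lambda,\vec\lambda)=\sum_{j=1}^{N-1}\sum_{i,i'}|\lambda^{j-1}_i-\lambda^j_{i'}|-2\sum_{j=1}^{N-1}\sum_{i<i'}|\lambda^j_i-\lambda^j_{i'}|,$$ and $P_{\operatorname{GL}(n)}(t;\mu)=\prod_k\prod_{s=1}^{m_k}(1-t^{2s})^{-1}$, $m_k$ being the multiplicities of the distinct entries of $\mu$. Then $P_\lambda(t)\in t^{(N-1)|\lambda|-2n(\lambda)}\mathbb Z[[t]]$, and the coefficient of $t^{(N-1)|\lambda|-2n(\lambda)}$ equals $\dim V^\lambda$, the dimension of the irreducible $\operatorname{GL}(N)$-module of highest weight $\lambda$. (Equivalently, the costalk $H^{G_{\mathcal O}}_*(\tilde{\mathcal R}^\lambda)$ of the type $A_{N-1}$ theory, with the modified grading whose Hilbert series is $P_\lambda$, lives in degrees $\ge\dim\mathrm{Gr}^\lambda_{\operatorname{PGL}(N)}$ and its lowest component has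 dimension $\dim V^\lambda$.)
   Context: $P_{\operatorname{GL}(n)}(t;\mu)$ is the Poincaré series of $H^*_{\operatorname{Stab}_{\operatorname{GL}(n)}(\mu)}(\mathrm{pt})$. $(N-1)|\lambda|-2n(\lambda)=\langle2\rho^\vee,\lambda\rangle=\dim\mathrm{Gr}^\lambda_{\operatorname{PGL}(N)}$. The series $P_\lambda(t)$ is the (modified) monopole formula for the costalk at $\lambda$ of the type $A_{N-1}$ quiver gauge theory with $\dim V=(N-1,\dots,1)$, $\dim W=(N,0,\dots,0)$. *)

From HB Require Import structures.
From mathcomp Require Import all_boot all_order all_algebra.
Set Implicit Arguments. Unset Strict Implicit. Unset Printing Implicit Defensive.
Import Order.TTheory GRing.Theory Num.Theory.
Local Open Scope ring_scope.

Definition isDomCoweight (n : nat) (mu : seq int) : bool :=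
  (size mu == n) && sorted (fun x y : int => y <= x) mu.

Definition wsize (lam : seq int) : int := \sum_(x <- lam) x.

(* n(lambda) = sum_{i=1}^N (i-1) lambda_i  (0-indexed: sum_i i * lam_i) *)
Definition nfun (lam : seq int) : int :=
  \sum_(i < size lam) (i%:Z * nth 0 lam i).

(* The exponent (N-1)|lambda| - 2 n(lambda) = dim Gr^lambda_{PGL(N)} *)
Definition lowDeg (N : nat) (lam : seq int) : int :=
  (N.-1)%:Z * wsize lam - 2%:Z * nfun lam.

Definition pairAbsSum (a b : seq int) : int :=
  \sum_(x <- a) \sum_(y <- b) `|x - y|.

Definition selfAbsSum (a : seq int) : int :=
  \sum_(i < size a) \sum_(i' < size a | (i < i')%N) `|nth 0 a i - nth 0 a i'|.

(* 2 Delta(lambda, vec lambda), where vec = [lambda^1; ...; lambda^{N-1}]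
   and lambda^0 := lambda. *)
Definition twoDelta (lam : seq int) (vec : seq (seq int)) : int :=
  \sum_(p <- zip (lam :: vec) vec) pairAbsSum p.1 p.2
  - 2%:Z * \sum_(mu <- vec) selfAbsSum mu.

(* Admissible tuples: vec = (lambda^1, ..., lambda^{N-1}) with lambda^j a
   dominant coweight of GL(N-j).  (0-indexed: entry j is lambda^{j+1}.) *)
Definition admissible (N : nat) (vec : seq (seq int)) : Prop :=
  size vec = N.-1 /\
  forall j : nat, (j < N.-1)%N -> isDomCoweight (N.-1 - j) (nth [::] vec j).

(* P_{GL(n)}(t; mu) = prod_k prod_{s=1}^{m_k} (1 - t^{2s})^{-1}, m_k the
   multiplicities of the distinct entries of mu.  glFactors mu lists the
   exponents 2s of all these geometric factors (1 - t^{2s})^{-1}. *)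
Definition glFactors (mu : seq int) : seq nat :=
  flatten [seq [seq (s.*2)%N | s <- iota 1 (count_mem v mu)] | v <- undup mu].

Definition allFactors (vec : seq (seq int)) : seq nat :=
  flatten [seq glFactors mu | mu <- vec].

(* A monomial of the expanded series P_lambda(t): a tuple vec together with
   an exponent a_f >= 0 chosen for each geometric factor (1 - t^f)^{-1}. *)
Definition isTerm (N : nat) (x : seq (seq int) * seq nat) : Prop :=
  admissible N x.1 /\ size x.2 = size (allFactors x.1).

Definition termDeg (lam : seq int) (x : seq (seq int) * seq nat) : int :=
  twoDelta lam x.1
  + (\sum_(i < size x.2) (nth 0%N x.2 i * nth 0%N (allFactors x.1) i)%N)%:Z.

(* "The coefficient of t^m in P_lambda(t) is the (finite) integer c":
   the monomials of degree m form a finite set of exactly c elements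
   (all monomials have coefficient +1). *)
Definition coeffIs (N : nat) (lam : seq int) (m : int) (c : nat) : Prop :=
  exists s : seq (seq (seq int) * seq nat),
    [/\ uniq s, size s = c &
        forall x, x \in s <-> (isTerm N x /\ termDeg lam x = m)].

Definition weylDim (lam : seq int) : rat :=
  \prod_(i < size lam) \prod_(j < size lam | (i < j)%N)
     (((nth 0 lam i - nth 0 lam j)%:~R + (j - i)%:R) / (j - i)%:R).

From HB Require Import structures.
From mathcomp Require Import all_boot all_order all_algebra.
From mathcomp Require Import fingroup perm.
From mathcomp Require Import ring lra zify.
Import Order.TTheory GRing.Theory Num.Theory.
Local Open Scope ring_scope.
Set Implicit Arguments. Unset Strict Implicit. Unset Printing Implicit Defensive.

(* Along the chain lam = lam^0, lam^1, ..., lam^(N-1) the exponent splits as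
     2 Delta(lam, vec) = sum_(i<i') |lam_i - lam_i'| + sum_j E(lam^(j-1), lam^j),
   where the first sum is (N-1)|lam| - 2 n(lam) for dominant lam, and the excess
     E(a, b) = sum_(i,i') |a_i - b_i'| - sum_(i<i') |a_i - a_i'| - sum_(i<i') |b_i - b_i'|
   of dominant a, b of lengths k+1 and k is a sum of slacks |u| - u >= 0, which
   vanishes exactly when b interlaces a.  So every monomial has degree at least
   (N-1)|lam| - 2 n(lam); the monomials of that degree are the Gelfand-Tsetlin
   patterns with all factor exponents zero; and bounding the degree bounds the
   excess, hence the entries and exponents, so every coefficient is finite.
   Gelfand-Tsetlin patterns are counted by the branching rule, which we derive
   from the Weyl dimension formula: with l_j = j - lam_j and V the Vandermonde
   product, k! * sum_(mu interlacing lam) V(l(mu)) = V(l(lam)), obtained by writing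
   V as a determinant of falling factorials and telescoping adjacent columns. *)

(** * Cartesian products of sequences *)

Fixpoint cartesian (T : Type) (Rs : seq (seq T)) : seq (seq T) :=
  if Rs is X :: Rs' then [seq x :: y | x <- X, y <- cartesian Rs'] else [:: [::]].

Lemma big_cartesian (R : comPzSemiRingType) (T : Type) (x0 : T) (Rs : seq (seq T))
    (F : 'I_(size Rs) -> T -> R) :
  \sum_(y <- cartesian Rs) \prod_(j < size Rs) F j (nth x0 y j) =
  \prod_(j < size Rs) \sum_(v <- nth [::] Rs j) F j v.
Proof.
elim: Rs F => [|X Rs IH] F /=; first by rewrite big_seq1 !big_ord0.
rewrite big_allpairs_dep big_ord_recl big_distrl /=; apply: eq_bigr => x _.
rewrite -(IH (fun j => F (lift ord0 j))) big_distrr /=; apply: eq_bigr => y _.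
by rewrite big_ord_recl.
Qed.

Section CartesianEq.

Variable T : eqType.

Lemma mem_cartesian_cons (x : T) y X Rs :
  (x :: y \in cartesian (X :: Rs)) = (x \in X) && (y \in cartesian Rs).
Proof.
apply/allpairsPdep/andP => [[x' [y' [Xx' y'Rs [-> ->]]]] // | [Xx yRs]].
by exists x, y.
Qed.

Lemma size_mem_cartesian (Rs : seq (seq T)) y : y \in cartesian Rs -> size y = size Rs.
Proof.
elim: Rs y => [|X Rs IH] [|x y] //=.
  by case/allpairsPdep => ? [? [_ _]].
by rewrite mem_cartesian_cons => /andP[_ /IH ->].
Qed.

Lemma cartesianP (x0 : T) (Rs : seq (seq T)) y :
  reflect (size y = size Rs /\ forall j, (j < size Rs)%N -> nth x0 y j \in nth [::] Rs j)
          (y \in cartesian Rs).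
Proof.
elim: Rs y => [|X Rs IH] [|x y].
- by rewrite mem_seq1; constructor.
- by rewrite mem_seq1; constructor => -[].
- by apply: (iffP idP) => [/size_mem_cartesian | []].
rewrite mem_cartesian_cons; apply: (iffP andP) => [[Xx /IH [sz_y y_Rs]] | [[sz_y] y_Rs]].
  by split=> [|[|j] lt_j] //=; [rewrite sz_y | apply: y_Rs].
by split; [apply: (y_Rs 0%N) | apply/IH; split=> // j; apply: (y_Rs j.+1)].
Qed.

Lemma mem_cartesian_nseq (X y : seq T) : {subset y <= X} -> y \in cartesian (nseq (size y) X).
Proof.
elim: y => [|x y IH] sub_yX //=; rewrite mem_cartesian_cons sub_yX ?mem_head //=.
by apply: IH => z yz; rewrite sub_yX // inE yz orbT.
Qed.

Lemma cons_allpairs_uniq (s : seq T) (t : T -> seq (seq T)) :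
  uniq s -> {in s, forall x, uniq (t x)} -> uniq [seq x :: y | x <- s, y <- t x].
Proof.
move=> us ut; apply: allpairs_uniq_dep => // -[x1 y1] [x2 y2] _ _ /= [ex ey].
by subst x2; rewrite ey.
Qed.

Lemma cartesian_uniq (Rs : seq (seq T)) : all uniq Rs -> uniq (cartesian Rs).
Proof.
elim: Rs => [|X Rs IH] //= /andP[uX uRs].
by apply: cons_allpairs_uniq => // x _; apply: IH.
Qed.

End CartesianEq.

(** * Determinants of falling factorials *)

Section Determinants.

Variable R : comNzRingType.

Lemma det_sum_cartesian (T : Type) (x0 : T) n (h : 'I_n -> 'I_n -> T -> R) Rs :
  size Rs = n ->
  \sum_(y <- cartesian Rs) \det (\matrix_(i, j) h i j (nth x0 y j)) =
  \det (\matrix_(i, j) \sum_(v <- nth [::] Rs j) h i j v).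
Proof.
move=> sizeRs; subst n; rewrite /determinant exchange_big /=.
apply: eq_bigr => s _; rewrite -big_distrr /=; congr (_ * _).
pose F j v := h ((s^-1)%g j) j v.
have reindex (G : 'I_(size Rs) -> 'I_(size Rs) -> R) :
    \prod_i G i (s i) = \prod_j G ((s^-1)%g j) j.
  by rewrite (reindex_inj (@perm_inj _ (s^-1)%g)); apply: eq_bigr => j _; rewrite permKV.
under eq_bigr do rewrite (reindex (fun i j => (\matrix_(i, j) _) i j)).
rewrite (reindex (fun i j => (\matrix_(i, j) _) i j)).
under eq_bigr do under eq_bigr do rewrite mxE.
by rewrite (big_cartesian x0 F); apply: eq_bigr => j _; rewrite mxE.
Qed.

Lemma det_scale_rows n (c : 'I_n -> R) (f : 'I_n -> 'I_n -> R) :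
  \det (\matrix_(i, j) (c i * f i j)) = \prod_i c i * \det (\matrix_(i, j) f i j).
Proof.
have -> : \matrix_(i, j) (c i * f i j) = diag_mx (\row_i c i) *m \matrix_(i, j) f i j.
  by rewrite mul_diag_mx; apply/matrixP => i j; rewrite !mxE.
by rewrite det_mulmx det_diag; congr (_ * _); apply: eq_bigr => i _; rewrite mxE.
Qed.

(* Subtract from each column its left neighbour (right multiplication by a
   unitriangular matrix), then expand along the first row. *)
Lemma det_col_differences n (f : nat -> nat -> R) : (forall j, f 0%N j = 1) ->
  \det (\matrix_(i < n.+1, j < n.+1) f i j) =
  \det (\matrix_(i < n, j < n) (f i.+1 j.+1 - f i.+1 j)).
Proof.
move=> f0; set A := \matrix_(i, j) f i j.
pose W : 'M[R]_n.+1 := \matrix_(k, j) ((k == j :> nat)%:R - (k.+1 == j :> nat)%:R).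
have detW : \det W = 1.
  rewrite -det_tr det_trig.
    by apply: big1 => i _; rewrite !mxE eqxx eqn_leq ltnn subr0.
  apply/is_trig_mxP => i j lt_ij; rewrite !mxE (gtn_eqF lt_ij).
  by rewrite (_ : (j.+1 == i :> nat) = false) ?subrr //; apply/negbTE/eqP; lia.
have AW i (j : 'I_n.+1) :
    (A *m W) i j = f i j - (if val j is j'.+1 then f i j' else 0) :> R.
  rewrite !mxE; under eq_bigr do rewrite !mxE mulrBr.
  rewrite sumrB (bigD1 j) //= eqxx mulr1 big1 => [|k /negbTE nkj]; last first.
    by rewrite -val_eqE /= in nkj; rewrite nkj mulr0.
  rewrite addr0; congr (_ - _); case: j => [[|j] lt_jn] /=.
    by rewrite big1 // => k _; rewrite mulr0.
  rewrite (bigD1 (Ordinal (ltnW lt_jn))) //= eqxx mulr1 big1 ?addr0 ?mxE // => k /negbTE nkj.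
  by rewrite -val_eqE /= in nkj; rewrite eqSS nkj mulr0.
rewrite -[\det A]mulr1 -detW -det_mulmx (expand_det_row _ ord0) big_ord_recl.
rewrite big1 => [|j _]; last by rewrite AW /= !f0 subrr mul0r.
rewrite AW /= f0 subr0 mul1r addr0 /cofactor expr0 mul1r.
by congr (\det _); apply/matrixP => i j; rewrite [RHS]mxE 2![LHS]mxE AW.
Qed.

Implicit Types (x : R) (f : nat -> R).

Definition falling x (i : nat) : R := \prod_(k <- iota 0 i) (x - k%:R).

Definition vander (n : nat) f : R := \prod_(i < n) \prod_(j < n | (i < j)%N) (f j - f i).

Lemma eq_vander n f g : f =1 g -> vander n f = vander n g.
Proof. by move=> fg; apply: eq_bigr => i _; apply: eq_bigr => j _; rewrite !fg. Qed.

Lemma falling0 x : falling x 0 = 1.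
Proof. by rewrite /falling big_nil. Qed.

Lemma fallingS x i : falling x i.+1 = falling x i * (x - i%:R).
Proof. by rewrite /falling -[i.+1]addn1 iotaD big_cat big_seq1. Qed.

Lemma fallingSS x i : falling (x + 1) i.+1 = (x + 1) * falling x i.
Proof.
rewrite /falling /= big_cons subr0 -(addn0 1%N) iotaDl big_map.
by congr (_ * _); apply: eq_bigr => k _; rewrite natrD addrKA.
Qed.

Lemma falling_telescope x (K i : nat) :
  i.+1%:R * \sum_(k <- iota 0 K) falling (x + k%:R) i =
  falling (x + K%:R) i.+1 - falling x i.+1.
Proof.
elim: K => [|K IH]; first by rewrite big_nil mulr0 addr0 subrr.
rewrite -[K.+1]addn1 iotaD big_cat big_seq1 /= add0n mulrDr IH natrD.
have step y : falling (y + 1) i.+1 - falling y i.+1 = i.+1%:R * falling y i.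
  by rewrite fallingSS fallingS mulrSr; ring.
by rewrite addrA -step; ring.
Qed.

(* The falling factorials are monic of degree [i], so their matrix of values is
   a unitriangular row transform of the Vandermonde matrix. *)
Lemma det_falling n f : \det (\matrix_(i < n, j < n) falling (f j) i) = vander n f.
Proof.
pose p i : {poly R} := \prod_(k <- iota 0 i) ('X - k%:R%:P).
have size_p i : size (p i) = i.+1 by rewrite size_prod_XsubC size_iota.
have p_lead i : (p i)`_i = 1.
  have := lead_coef_prod_XsubC (iota 0 i) predT (fun k : nat => k%:R : R).
  by rewrite /lead_coef size_p.
pose L : 'M[R]_n := \matrix_(i, k) (p i)`_k.
have -> : \matrix_(i < n, j < n) falling (f j) i = L *m Vandermonde n (\row_j f j).
  apply/matrixP => i j; rewrite !mxE (_ : falling _ _ = (p i).[f j]); last first.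
    by rewrite horner_prod; apply: eq_bigr => k _; rewrite hornerXsubC.
  by rewrite (@horner_coef_wide _ n) ?size_p //; apply: eq_bigr => k _; rewrite !mxE.
rewrite det_mulmx det_Vandermonde det_trig; last first.
  by apply/is_trig_mxP => i j lt_ij; rewrite mxE nth_default // size_p.
rewrite big1 ?mul1r => [|i _]; last by rewrite mxE p_lead.
by apply: eq_bigr => i _; apply: eq_bigr => j _; rewrite !mxE.
Qed.

End Determinants.

(** * Interlacing and the branching rule *)

Definition int_range (lo hi : int) : seq int :=
  if lo <= hi then [seq hi - k%:Z | k <- iota 0 `|hi - lo|.+1] else [::].

Lemma mem_int_range v lo hi : (v \in int_range lo hi) = (lo <= v <= hi).
Proof.
rewrite /int_range; case: ifP => le_lo_hi; last first.
  apply/esym/negbTE/andP => -[le_lo_v le_v_hi].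
  by rewrite (le_trans le_lo_v le_v_hi) in le_lo_hi.
apply/mapP/andP => [[k] | [le_lo_v le_v_hi]].
  by rewrite mem_iota ltnS => /andP[_ le_k] ->; lia.
by exists `|hi - v|%N; [rewrite mem_iota ltnS /=; lia | lia].
Qed.

Lemma int_range_uniq lo hi : uniq (int_range lo hi).
Proof.
rewrite /int_range; case: ifP => // _.
by rewrite map_inj_uniq ?iota_uniq // => a b /= /addrI /oppr_inj [].
Qed.

Fixpoint interlace_ranges (l : seq int) : seq (seq int) :=
  if l is a :: ((b :: _) as l') then int_range b a :: interlace_ranges l' else [::].

Definition interlacing (l : seq int) : seq (seq int) := cartesian (interlace_ranges l).

Lemma size_interlace_ranges l : size (interlace_ranges l) = (size l).-1.
Proof. by elim: l => [|a [|b l] IH] //=; rewrite IH. Qed.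

Lemma nth_interlace_ranges l j : (j.+1 < size l)%N ->
  nth [::] (interlace_ranges l) j = int_range (nth 0 l j.+1) (nth 0 l j).
Proof. by elim: l j => [|a [|b l] IH] [|j] //= lt_j; rewrite IH. Qed.

Lemma interlacingP (l mu : seq int) :
  reflect (size mu = (size l).-1 /\
           forall j, (j.+1 < size l)%N -> nth 0 l j.+1 <= nth 0 mu j <= nth 0 l j)
          (mu \in interlacing l).
Proof.
apply: (iffP (cartesianP 0 _ _)); rewrite size_interlace_ranges => -[sz_mu mu_l].
  split=> // j lt_j; rewrite -mem_int_range -nth_interlace_ranges ?mu_l //; lia.
split=> // j lt_j; rewrite nth_interlace_ranges ?mem_int_range ?mu_l //; lia.
Qed.

Lemma mem_interlacing_cons2 a0 a1 a b0 b :
  (b0 :: b \in interlacing [:: a0, a1 & a]) = (a1 <= b0 <= a0) && (b \in interlacing (a1 :: a)).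
Proof. by rewrite /interlacing /= mem_cartesian_cons mem_int_range. Qed.

Lemma interlacing_uniq l : uniq (interlacing l).
Proof.
apply: cartesian_uniq; elim: l => [|a [|b l] IH] //=.
by rewrite int_range_uniq.
Qed.

Lemma sorted_ge_nth (l : seq int) j : sorted >=%R l -> (j.+1 < size l)%N ->
  nth 0 l j.+1 <= nth 0 l j.
Proof. by move/(sortedP 0) => le_l /le_l. Qed.

Lemma sorted_ge_head (a0 : int) a : sorted >=%R (a0 :: a) -> {in a, forall x, x <= a0}.
Proof. by move/(order_path_min ge_trans)/allP. Qed.

Lemma interlacing_sorted l mu : mu \in interlacing l -> sorted >=%R mu.
Proof.
case/interlacingP => sz_mu mu_l; apply/(sortedP 0) => j lt_j.
have lt_j2 : (j.+2 < size l)%N by move: lt_j; rewrite sz_mu; case: (size l).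
have /andP[_ le_mu1] := mu_l j.+1 lt_j2; have /andP[le_mu0 _] := mu_l j (ltnW lt_j2).
exact: le_trans le_mu1 le_mu0.
Qed.

Definition rho_shift (l : seq int) (j : nat) : int := j%:Z - nth 0 l j.

Lemma prod_ord_succ (R : pzSemiRingType) n : \prod_(i < n) i.+1%:R = n`!%:R :> R.
Proof.
elim: n => [|n IH]; first by rewrite big_ord0.
by rewrite big_ord_recr /= IH -natrM mulnC -factS.
Qed.

(* In the falling-factorial determinant for [vander n.+1 (rho_shift l)], the
   difference of adjacent columns telescopes to a sum over the range between
   consecutive entries of [l]; multilinearity then expands the determinant as a
   sum over the interlacing sequences. *)
Lemma vander_branching n (l : seq int) : size l = n.+1 -> sorted >=%R l ->
  n`!%:R * \sum_(mu <- interlacing l) vander n (rho_shift mu) = vander n.+1 (rho_shift l).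
Proof.
move=> sz_l sorted_l.
have le_l (j : 'I_n) : nth 0 l j.+1 <= nth 0 l j by rewrite sorted_ge_nth // sz_l ltnS.
pose K (j : nat) := `|(l`_j - l`_j.+1)%R|%N.+1.
rewrite -[RHS]det_falling (@det_col_differences _ n (fun i j => falling (rho_shift l j) i));
  last by move=> j; apply: falling0.
have -> : \matrix_(i < n, j < n)
    (falling (rho_shift l j.+1) i.+1 - falling (rho_shift l j) i.+1) =
    \matrix_(i, j) (i.+1%:R * \sum_(k <- iota 0 (K j)) falling (rho_shift l j + k%:R) i).
  apply/matrixP => i j; rewrite !mxE falling_telescope; congr (falling _ _ - _).
  by move: (le_l j); rewrite /rho_shift /K natz; lia.
rewrite (det_scale_rows (fun i : 'I_n => i.+1%:R)
  (fun i j => \sum_(k <- iota 0 (K j)) falling (rho_shift l j + k%:R) i)) prod_ord_succ.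
congr (_ * _); under eq_bigr do rewrite -det_falling.
rewrite (@det_sum_cartesian _ _ 0 n (fun i j v => falling (j%:Z - v) i)); last first.
  by rewrite size_interlace_ranges sz_l.
congr (\det _); apply/matrixP => i j; rewrite !mxE.
rewrite nth_interlace_ranges ?sz_l ?ltnS // /int_range le_l big_map.
by apply: eq_bigr => k _; rewrite /rho_shift natz; congr falling; ring.
Qed.

(* The zero weight, whose only interlacing sequence is zero, turns the branching
   identity into the recursion for the Vandermonde product of [0, ..., n]. *)
Lemma vander_natS n : vander n.+1 (fun j => j%:Z) = n`!%:R * vander n (fun j => j%:Z).
Proof.
have sorted0 : sorted >=%R (nseq n.+1 (0 : int)) by elim: n => // n /= ->; rewrite lexx.
have rho_shift0 k : rho_shift (nseq k 0) =1 (fun j => j%:Z).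
  by move=> j; rewrite /rho_shift nth_nseq if_same subr0.
have interlacing0 : interlacing (nseq n.+1 0) = [:: nseq n 0].
  by elim: n {sorted0} => //= n; rewrite /interlacing /= => ->.
have := vander_branching (size_nseq n.+1 (0 : int)) sorted0.
by rewrite interlacing0 big_seq1 !(eq_vander _ (rho_shift0 _)) => ->.
Qed.

Lemma vander_nat_gt0 n : 0 < vander n (fun j => j%:Z).
Proof.
by apply: prodr_gt0 => i _; apply: prodr_gt0 => j lt_ij; rewrite subr_gt0 ltz_nat.
Qed.

Lemma weylDim_vander l : weylDim l =
  (vander (size l) (rho_shift l))%:~R / (vander (size l) (fun j => j%:Z))%:~R.
Proof.
rewrite /weylDim /vander !rmorph_prod -prodf_div; apply: eq_bigr => i _.
rewrite !rmorph_prod -prodf_div; apply: eq_bigr => j lt_ij.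
have -> : rho_shift l j - rho_shift l i = (l`_i - l`_j) + (j - i)%N%:Z.
  by rewrite /rho_shift; lia.
have -> : j%:Z - i%:Z = (j - i)%N%:Z by lia.
by congr (_ / _); rewrite ?rmorphD -natz rmorph_nat.
Qed.

Lemma weylDim_branching n l : size l = n.+1 -> sorted >=%R l ->
  weylDim l = \sum_(mu <- interlacing l) weylDim mu.
Proof.
move=> sz_l sorted_l.
have weylDim_mu mu : mu \in interlacing l ->
    weylDim mu = (vander n (rho_shift mu))%:~R / (vander n (fun j => j%:Z))%:~R.
  by case/interlacingP => sz_mu _; rewrite weylDim_vander sz_mu sz_l.
rewrite (eq_big_seq _ weylDim_mu) -mulr_suml -rmorph_sum weylDim_vander sz_l.
rewrite -(vander_branching sz_l sorted_l) vander_natS !intrM.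
have fact_neq0 : (n`!%:R : int)%:~R != 0 :> rat.
  by rewrite intr_eq0 pnatr_eq0 -lt0n fact_gt0.
have vander_neq0 : (vander n (fun j => j%:Z))%:~R != 0 :> rat.
  by rewrite intr_eq0 gt_eqF ?vander_nat_gt0.
by rewrite invfM mulrACA divff // mul1r.
Qed.

Fixpoint gt_patterns (n : nat) (lam : seq int) : seq (seq (seq int)) :=
  if n is n'.+1 then [seq mu :: v | mu <- interlacing lam, v <- gt_patterns n' mu]
  else [:: [::]].

Lemma gt_patterns_uniq n lam : uniq (gt_patterns n lam).
Proof.
elim: n lam => [|n IH] lam //=.
by apply: cons_allpairs_uniq => [|mu _]; [apply: interlacing_uniq | apply: IH].
Qed.

Lemma size_gt_patterns n lam : size lam = n.+1 -> sorted >=%R lam ->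
  (size (gt_patterns n lam))%:R = weylDim lam.
Proof.
elim: n lam => [|n IH] lam sz_lam sorted_lam.
  by rewrite /weylDim sz_lam big_ord1 big_pred0 // => -[[|j] lt_j1].
rewrite (weylDim_branching sz_lam sorted_lam) /= size_allpairs_dep sumnE big_map natr_sum.
apply: eq_big_seq => mu mu_lam; have [sz_mu _] := interlacingP _ _ mu_lam.
by rewrite IH ?sz_mu ?sz_lam // (interlacing_sorted mu_lam).
Qed.

(** * The interlacing excess *)

Lemma selfAbsSum_nil : selfAbsSum [::] = 0.
Proof. by rewrite /selfAbsSum big_ord0. Qed.

Lemma selfAbsSum_cons a s : selfAbsSum (a :: s) = \sum_(y <- s) `|a - y| + selfAbsSum s.
Proof.
rewrite /selfAbsSum /= big_ord_recl big_mkcond big_ord_recl /= add0r; congr (_ + _).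
  by rewrite (big_nth 0) big_mkord.
apply: eq_bigr => i _; rewrite big_mkcond big_ord_recl /= add0r [RHS]big_mkcond.
by apply: eq_bigr => j _; rewrite /bump !leq0n.
Qed.

Lemma selfAbsSum1 a : selfAbsSum [:: a] = 0.
Proof. by rewrite selfAbsSum_cons big_nil selfAbsSum_nil addr0. Qed.

Lemma pairAbsSum_consl a s t :
  pairAbsSum (a :: s) t = \sum_(y <- t) `|a - y| + pairAbsSum s t.
Proof. by rewrite /pairAbsSum big_cons. Qed.

Lemma pairAbsSum_consr s b t :
  pairAbsSum s (b :: t) = \sum_(x <- s) `|x - b| + pairAbsSum s t.
Proof. by rewrite /pairAbsSum -big_split; apply: eq_bigr => x _; rewrite big_cons. Qed.

Lemma sumr_const_sub (V : zmodType) (s : seq V) c :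
  \sum_(x <- s) (c - x) = c *+ size s - \sum_(x <- s) x.
Proof. by rewrite sumrB big_const_seq count_predT iter_addr_0. Qed.

Definition excess (a b : seq int) : int := pairAbsSum a b - selfAbsSum a - selfAbsSum b.

Definition slack (u : int) : int := `|u| - u.

Lemma slack_ge0 u : 0 <= slack u.
Proof. by rewrite subr_ge0 ler_norm. Qed.

Lemma slack_geN u : - u <= slack u.
Proof. by have := normr_ge0 u; rewrite /slack; lra. Qed.

Lemma ger0_slack u : 0 <= u -> slack u = 0.
Proof. by move=> u_ge0; rewrite /slack ger0_norm ?subrr. Qed.

Lemma sum_slack_ge0 (s : seq int) (F : int -> int) : 0 <= \sum_(x <- s) slack (F x).
Proof. by apply: sumr_ge0 => x _; apply: slack_ge0. Qed.

(* The slacks measure the failure of the interlacing inequalities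
   [a1 <= b0 <= a0] at the heads of [a0 :: a1 :: _] and [b0 :: _]. *)
Definition cons_slack (a0 : int) a b0 b : int :=
  slack (a0 - b0) + \sum_(y <- b) slack (a0 - y) + \sum_(x <- a) slack (b0 - x).

Lemma cons_slack_ge0 a0 a b0 b : 0 <= cons_slack a0 a b0 b.
Proof. by apply: addr_ge0; [apply: addr_ge0|]; rewrite ?slack_ge0 ?sum_slack_ge0. Qed.

Lemma cons_slack_bound a0 a1 a b0 b :
  a1 - cons_slack a0 (a1 :: a) b0 b <= b0 <= a0 + cons_slack a0 (a1 :: a) b0 b.
Proof.
have := slack_geN (a0 - b0); have := slack_geN (b0 - a1); have := slack_ge0 (a0 - b0).
have := slack_ge0 (b0 - a1); have := sum_slack_ge0 b (fun y => a0 - y).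
by have := sum_slack_ge0 a (fun x => b0 - x); rewrite /cons_slack big_cons; lra.
Qed.

Lemma cons_slack_eq0 a0 a1 a b0 b :
  sorted >=%R [:: a0, a1 & a] -> sorted >=%R (b0 :: b) ->
  (cons_slack a0 (a1 :: a) b0 b == 0) = (a1 <= b0 <= a0).
Proof.
move=> sorted_a sorted_b; apply/idP/idP => [/eqP slack0 | /andP[le_a1b0 le_b0a0]].
  by have := cons_slack_bound a0 a1 a b0 b; rewrite slack0 subr0 addr0.
have le_a1 := sorted_ge_head (path_sorted sorted_a); have le_b0 := sorted_ge_head sorted_b.
rewrite /cons_slack big_cons !ger0_slack ?subr_ge0 // !big1_seq ?addr0 //.
  by move=> x /andP[_ /le_a1 le_x]; rewrite ger0_slack // subr_ge0 (le_trans le_x).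
by move=> y /andP[_ /le_b0 le_y]; rewrite ger0_slack // subr_ge0 (le_trans le_y).
Qed.

Lemma excess_nil a0 : excess [:: a0] [::] = 0.
Proof. by rewrite /excess /pairAbsSum big_seq1 big_nil selfAbsSum1 selfAbsSum_nil !subr0. Qed.

Lemma excess_cons a0 a b0 b : sorted >=%R (a0 :: a) -> sorted >=%R (b0 :: b) ->
  size a = (size b).+1 -> excess (a0 :: a) (b0 :: b) = excess a b + cons_slack a0 a b0 b.
Proof.
move=> /sorted_ge_head le_a /sorted_ge_head le_b sz.
have sum_le (c : int) s : {in s, forall x, x <= c} ->
    \sum_(x <- s) `|c - x| = \sum_(x <- s) (c - x).
  by move=> le_s; apply: eq_big_seq => x /le_s le_x; rewrite ger0_norm // subr_ge0.
have sum_slack (c : int) s :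
    \sum_(x <- s) `|c - x| = \sum_(x <- s) slack (c - x) + \sum_(x <- s) (c - x).
  by rewrite -big_split; apply: eq_bigr => x _; rewrite /slack /= subrK.
rewrite /excess pairAbsSum_consl pairAbsSum_consr !selfAbsSum_cons big_cons.
rewrite (sum_le a0 a le_a) (sum_le b0 b le_b).
under [\sum_(x <- a) `|x - b0|]eq_bigr do rewrite distrC.
by rewrite !sum_slack !sumr_const_sub sz mulrS /cons_slack /slack; ring.
Qed.

Lemma sorted_interlace_ind (P : seq int -> seq int -> Prop) :
  (forall a0, P [:: a0] [::]) ->
  (forall a0 a b0 b, sorted >=%R (a0 :: a) -> sorted >=%R (b0 :: b) ->
     size a = (size b).+1 -> P a b -> P (a0 :: a) (b0 :: b)) ->
  forall a b, sorted >=%R a -> sorted >=%R b -> size a = (size b).+1 -> P a b.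
Proof.
move=> P1 Pcons a b; elim: b a => [|b0 b IH] [|a0 a] // sorted_a sorted_b /succn_inj sz.
  by rewrite (size0nil sz); apply: P1.
by apply: Pcons => //; apply: IH => //; [apply: path_sorted sorted_a | apply: path_sorted sorted_b].
Qed.

Lemma excess_ge0 a b : sorted >=%R a -> sorted >=%R b -> size a = (size b).+1 ->
  0 <= excess a b.
Proof.
move: a b; apply: sorted_interlace_ind => [a0 | a0 a b0 b sa sb sz ge0].
  by rewrite excess_nil.
by rewrite excess_cons // addr_ge0 ?cons_slack_ge0.
Qed.

Lemma excess_eq0 a b : sorted >=%R a -> sorted >=%R b -> size a = (size b).+1 ->
  (excess a b == 0) = (b \in interlacing a).
Proof.
move: a b; apply: sorted_interlace_ind => [a0 | a0 a b0 b sa sb sz IH].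
  by rewrite excess_nil eqxx mem_seq1.
case: a sa sz IH => [|a1 a] // sa sz IH.
rewrite excess_cons // mem_interlacing_cons2 -IH paddr_eq0 ?cons_slack_ge0 //.
  by rewrite cons_slack_eq0 // andbC.
exact: excess_ge0 (path_sorted sa) (path_sorted sb) sz.
Qed.

Lemma excess_bound a b : sorted >=%R a -> sorted >=%R b -> size a = (size b).+1 ->
  forall lo hi, {in a, forall x, lo <= x <= hi} ->
  {in b, forall y, lo - excess a b <= y <= hi + excess a b}.
Proof.
move: a b; apply: sorted_interlace_ind => [a0 | a0 a b0 b sa sb sz IH] lo hi bound_a y //.
case: a sa sz IH bound_a => [|a1 a] // sa sz IH bound_a.
have := cons_slack_ge0 a0 (a1 :: a) b0 b.
have := excess_ge0 (path_sorted sa) (path_sorted sb) sz.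
have bound_a' : {in a1 :: a, forall x, lo <= x <= hi}.
  by move=> x x_a; apply: bound_a; rewrite inE x_a orbT.
rewrite excess_cons // inE => ge0 ge0' /predU1P [-> | y_b].
  have /andP[lo_a1 _] := bound_a' a1 (mem_head _ _).
  have /andP[_ a0_hi] := bound_a a0 (mem_head _ _).
  by have /andP[] := cons_slack_bound a0 a1 a b0 b; lra.
by have /andP[] := IH lo hi bound_a' y y_b; lra.
Qed.

(** * Chains of dominant coweights *)

Lemma isDomCoweightE n mu : isDomCoweight n mu = (size mu == n) && sorted >=%R mu.
Proof. by []. Qed.

Lemma admissible_cons n mu v :
  admissible n.+2 (mu :: v) <-> isDomCoweight n.+1 mu /\ admissible n.+1 v.
Proof.
split=> [[[sz_v] dom_v] | [dom_mu [sz_v dom_v]]].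
  by split; [apply: (dom_v 0%N) | split=> // j; rewrite -subSS; apply: (dom_v j.+1)].
by split=> [|[|j] lt_j]; rewrite /= ?sz_v ?subSS //; apply: dom_v.
Qed.

Lemma admissible_size_le n vec mu : admissible n.+1 vec -> mu \in vec -> (size mu <= n)%N.
Proof.
case=> sz_vec dom_vec mu_vec; have lt_mu : (index mu vec < n)%N by rewrite -[n]sz_vec index_mem.
by have := dom_vec _ lt_mu; rewrite nth_index // => /andP[/eqP -> _]; apply: leq_subr.
Qed.

Fixpoint chain_excess (lam : seq int) (vec : seq (seq int)) : int :=
  if vec is mu :: vec' then excess lam mu + chain_excess mu vec' else 0.

Lemma twoDelta_chain_excess lam vec :
  twoDelta lam vec = selfAbsSum lam - selfAbsSum (last lam vec) + chain_excess lam vec.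
Proof.
elim: vec lam => [|mu vec IH] lam; first by rewrite /twoDelta !big_nil /=; ring.
have -> : twoDelta lam (mu :: vec) =
    excess lam mu + selfAbsSum lam - selfAbsSum mu + twoDelta mu vec.
  by rewrite /twoDelta /= !big_cons /excess; ring.
by rewrite IH /=; ring.
Qed.

Lemma size_last_admissible n lam vec : size lam = n.+1 -> admissible n.+1 vec ->
  size (last lam vec) = 1%N.
Proof.
elim: n lam vec => [|n IH] lam [|mu vec] sz_lam //; try by case.
by case/admissible_cons => /andP[/eqP sz_mu _] /(IH _ _ sz_mu).
Qed.

Lemma chain_excess_ge0 n lam vec : sorted >=%R lam -> size lam = n.+1 ->
  admissible n.+1 vec -> 0 <= chain_excess lam vec.
Proof.
elim: n lam vec => [|m IH] lam [|mu vec] sorted_lam sz_lam //; try by case.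
case/admissible_cons => /andP[/eqP sz_mu sorted_mu] adm_vec /=.
by rewrite addr_ge0 ?excess_ge0 ?sz_lam ?sz_mu ?IH.
Qed.

Lemma chain_excess_eq0 n lam vec : sorted >=%R lam -> size lam = n.+1 ->
  admissible n.+1 vec -> (chain_excess lam vec == 0) = (vec \in gt_patterns n lam).
Proof.
elim: n lam vec => [|m IH] lam [|mu vec] sorted_lam sz_lam //; try by case.
case/admissible_cons => /andP[/eqP sz_mu sorted_mu] adm_vec /=.
have ge0 := chain_excess_ge0 sorted_mu sz_mu adm_vec.
rewrite paddr_eq0 ?excess_ge0 ?sz_lam ?sz_mu // excess_eq0 ?sz_lam ?sz_mu // IH //.
apply/andP/allpairsPdep => [[mu_lam vec_mu] | [_ [_ [? ? [-> ->]]]]] //.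
by exists mu, vec.
Qed.

Lemma chain_excess_bound n lam vec lo hi : sorted >=%R lam -> size lam = n.+1 ->
  admissible n.+1 vec -> {in lam, forall x, lo <= x <= hi} ->
  forall mu y, mu \in vec -> y \in mu ->
  lo - chain_excess lam vec <= y <= hi + chain_excess lam vec.
Proof.
elim: n lam vec lo hi => [|m IH] lam [|mu vec] lo hi sorted_lam sz_lam //; try by case.
case/admissible_cons => /andP[/eqP sz_mu sorted_mu] adm_vec bound_lam nu y /=.
have sz_lam_mu : size lam = (size mu).+1 by rewrite sz_lam sz_mu.
have bound_mu := excess_bound sorted_lam sorted_mu sz_lam_mu bound_lam.
have ge0 := chain_excess_ge0 sorted_mu sz_mu adm_vec.
have ge0' := excess_ge0 sorted_lam sorted_mu sz_lam_mu.
rewrite inE => /predU1P [-> y_mu | nu_vec y_nu].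
  by have /andP[] := bound_mu y y_mu; lra.
by have /andP[] := IH _ _ _ _ sorted_mu sz_mu adm_vec bound_mu nu y nu_vec y_nu; lra.
Qed.

Lemma gt_patterns_admissible n lam vec : sorted >=%R lam -> size lam = n.+1 ->
  vec \in gt_patterns n lam -> admissible n.+1 vec.
Proof.
elim: n lam vec => [|m IH] lam vec sorted_lam sz_lam; first by rewrite mem_seq1 => /eqP ->.
case/allpairsPdep => mu [vec' [mu_lam vec'_mu ->]].
have [sz_mu _] := interlacingP _ _ mu_lam; rewrite sz_lam /= in sz_mu.
have sorted_mu := interlacing_sorted mu_lam.
apply/admissible_cons; split; first by rewrite isDomCoweightE sz_mu eqxx sorted_mu.
exact: IH sorted_mu sz_mu vec'_mu.
Qed.

(** * Monomials of P_lambda *)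

Lemma wsize_cons a s : wsize (a :: s) = a + wsize s.
Proof. by rewrite /wsize big_cons. Qed.

Lemma nfun_cons a s : nfun (a :: s) = nfun s + wsize s.
Proof.
rewrite /nfun /wsize big_ord_recl /= mul0r add0r (big_nth 0) big_mkord -big_split /=.
by apply: eq_bigr => i _; rewrite /bump /= add1n intS mulrDl mul1r addrC.
Qed.

Lemma selfAbsSum_lowDeg l : sorted >=%R l -> selfAbsSum l = lowDeg (size l) l.
Proof.
elim: l => [|a s IH] sorted_as.
  by rewrite selfAbsSum_nil /lowDeg /wsize /nfun big_nil big_ord0.
have le_s := sorted_ge_head sorted_as.
rewrite selfAbsSum_cons IH ?(path_sorted sorted_as) //.
under eq_big_seq => y /le_s le_y do rewrite ger0_norm ?subr_ge0 //.
have predE : ((size s).-1)%:Z * wsize s = (size s)%:Z * wsize s - wsize s.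
  by case: s {IH le_s sorted_as} => [|b t]; rewrite /= ?/wsize ?big_nil ?intS; ring.
rewrite sumr_const_sub /lowDeg nfun_cons wsize_cons -/(wsize s) /= predE -mulr_natl natz.
ring.
Qed.

Lemma allFactors_gt0 vec : {in allFactors vec, forall f, 0 < f}%N.
Proof.
move=> f /flatten_mapP [mu _] /flatten_mapP [v _] /mapP [s].
by rewrite mem_iota => /andP[s_gt0 _] ->; rewrite double_gt0.
Qed.

Section WeightedSum.

Variables (e F : seq nat).
Hypotheses (sz_eF : size e = size F) (F_gt0 : {in F, forall f, 0 < f}%N).

Let S := (\sum_(i < size e) nth 0 e i * nth 0 F i)%N.

Lemma weighted_sum_ge k : k \in e -> (k <= S)%N.
Proof.
move=> e_k; have lt_k : (index k e < size e)%N by rewrite index_mem.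
rewrite /S (bigD1 (Ordinal lt_k)) //= nth_index // (leq_trans _ (leq_addr _ _)) //.
by rewrite leq_pmulr // F_gt0 // mem_nth // -sz_eF.
Qed.

Lemma weighted_sum_eq0 : S = 0%N -> e = nseq (size e) 0%N.
Proof.
move=> S0; apply: (@eq_from_nth _ 0%N) => [|i lt_i]; first by rewrite size_nseq.
by rewrite nth_nseq lt_i; apply/eqP; rewrite -leqn0 -S0 weighted_sum_ge ?mem_nth.
Qed.

End WeightedSum.

Definition factorDeg (x : seq (seq int) * seq nat) : nat :=
  \sum_(i < size x.2) nth 0 x.2 i * nth 0 (allFactors x.1) i.

Lemma termDeg_excess n lam x : sorted >=%R lam -> size lam = n.+1 -> isTerm n.+1 x ->
  termDeg lam x = lowDeg n.+1 lam + chain_excess lam x.1 + (factorDeg x)%:Z.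
Proof.
move=> sorted_lam sz_lam [adm_x _]; rewrite /termDeg twoDelta_chain_excess.
have := size_last_admissible sz_lam adm_x.
case: (last lam x.1) => [|a []] // _; rewrite selfAbsSum1 subr0.
by rewrite selfAbsSum_lowDeg // sz_lam.
Qed.

Lemma lowDeg_le_termDeg n lam x : sorted >=%R lam -> size lam = n.+1 -> isTerm n.+1 x ->
  lowDeg n.+1 lam <= termDeg lam x.
Proof.
move=> sorted_lam sz_lam term_x; rewrite (termDeg_excess sorted_lam sz_lam term_x).
by rewrite -addrA lerDl addr_ge0 ?(chain_excess_ge0 sorted_lam sz_lam term_x.1).
Qed.

Definition admissibleb (N : nat) (vec : seq (seq int)) : bool :=
  (size vec == N.-1) && all (fun j => isDomCoweight (N.-1 - j) (nth [::] vec j)) (iota 0 N.-1).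

Lemma admissibleP N vec : reflect (admissible N vec) (admissibleb N vec).
Proof.
apply: (iffP andP) => [[/eqP sz_vec /allP dom_vec] | [sz_vec dom_vec]].
  by split=> // j lt_j; apply: dom_vec; rewrite mem_iota.
by split; [apply/eqP | apply/allP => j; rewrite mem_iota => /dom_vec].
Qed.

Lemma coeffIs_exists N lam m (s0 : seq (seq (seq int) * seq nat)) :
  (forall x, isTerm N x -> termDeg lam x = m -> x \in s0) -> exists c, coeffIs N lam m c.
Proof.
move=> s0_terms.
pose s := undup [seq x <- s0 | [&& admissibleb N x.1, size x.2 == size (allFactors x.1)
                                  & termDeg lam x == m]].
exists (size s), s; split=> [|//|x]; first exact: undup_uniq.
rewrite mem_undup mem_filter; split.
  by case/andP => /and3P[/admissibleP adm_x /eqP sz_x /eqP deg_x].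
case=> [[adm_x sz_x] deg_x]; rewrite s0_terms // andbT.
by apply/and3P; split; [apply/admissibleP | apply/eqP | apply/eqP].
Qed.

Lemma norm_le_sum (R : numDomainType) (s : seq R) x : x \in s -> `|x| <= \sum_(y <- s) `|y|.
Proof.
elim: s => [|a s IH] //; rewrite inE big_cons => /predU1P [-> | /IH le_x].
  by rewrite lerDl sumr_ge0.
by rewrite (le_trans le_x) // lerDr.
Qed.

(* A monomial of degree [m] has excess and factor exponents at most
   [|m - lowDeg|], hence entries bounded in terms of [lam] and [m]. *)
Lemma terms_of_degree_finite n lam m : sorted >=%R lam -> size lam = n.+1 ->
  exists s0 : seq (seq (seq int) * seq nat),
    forall x, isTerm n.+1 x -> termDeg lam x = m -> x \in s0.
Proof.
move=> sorted_lam sz_lam; set D := m - lowDeg n.+1 lam; set B := \sum_(y <- lam) `|y|.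
pose rows : seq (seq int) := flatten [seq cartesian (nseq k (int_range (- (B + `|D|)) (B + `|D|)))
                                    | k <- iota 0 n.+1].
pose exps := iota 0 `|D|.+1.
exists [seq (vec, e) | vec <- cartesian (nseq n rows),
                       e <- cartesian (nseq (size (allFactors vec)) exps)].
move=> [vec e] term_x deg_x; have [/= adm_vec sz_e] := term_x; have [sz_vec _] := adm_vec.
have := termDeg_excess sorted_lam sz_lam term_x; rewrite deg_x /= => degE.
have ge0 := chain_excess_ge0 sorted_lam sz_lam adm_vec.
have fdeg_ge0 : 0 <= (factorDeg (vec, e))%:Z by [].
have le_D : chain_excess lam vec + (factorDeg (vec, e))%:Z <= `|D|.
  by apply: le_trans (ler_norm D); rewrite /D degE; lra.
apply/allpairsPdep; exists vec, e; split=> //.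
  rewrite -[n]sz_vec; apply: mem_cartesian_nseq => mu mu_vec.
  apply/flatten_mapP; exists (size mu).
    by rewrite mem_iota ltnS (admissible_size_le adm_vec).
  apply: mem_cartesian_nseq => y y_mu; rewrite mem_int_range.
  have bound_lam : {in lam, forall x, - B <= x <= B}.
    by move=> x /norm_le_sum; rewrite ler_norml.
  by have /andP[] := chain_excess_bound sorted_lam sz_lam adm_vec bound_lam mu_vec y_mu; lra.
rewrite -sz_e; apply: mem_cartesian_nseq => k e_k; rewrite /exps mem_iota ltnS.
apply: leq_trans (weighted_sum_ge sz_e (@allFactors_gt0 vec) e_k) _.
by rewrite -lez_nat; lra.
Qed.

Lemma coeffIs_lowDeg n lam : sorted >=%R lam -> size lam = n.+1 ->
  coeffIs n.+1 lam (lowDeg n.+1 lam) (size (gt_patterns n lam)).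
Proof.
move=> sorted_lam sz_lam; have adm_gt := gt_patterns_admissible sorted_lam sz_lam.
exists [seq (vec, nseq (size (allFactors vec)) 0%N) | vec <- gt_patterns n lam].
split=> [|| [vec e]]; first by rewrite map_inj_uniq ?gt_patterns_uniq // => ? ? [].
  by rewrite size_map.
split=> [/mapP [v v_gt [-> ->]] | [term_x deg_x]].
  have term_v : isTerm n.+1 (v, nseq (size (allFactors v)) 0%N).
    by split; [apply: adm_gt | rewrite size_nseq].
  split=> //; rewrite (termDeg_excess sorted_lam sz_lam term_v) /=.
  have /eqP -> : chain_excess lam v == 0.
    by rewrite (chain_excess_eq0 sorted_lam sz_lam (adm_gt _ v_gt)).
  by rewrite /factorDeg big1 ?addr0 // => i _; rewrite /= nth_nseq if_same.
have [/= adm_vec sz_e] := term_x; have := termDeg_excess sorted_lam sz_lam term_x.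
have ge0 := chain_excess_ge0 sorted_lam sz_lam adm_vec.
have fdeg_ge0 : 0 <= (factorDeg (vec, e))%:Z by [].
rewrite deg_x /= => degE.
have /eqP exc0 : chain_excess lam vec == 0 by apply/eqP; lra.
have fdeg0 : factorDeg (vec, e) = 0%N by apply/eqP; rewrite -eqz_nat; apply/eqP; lra.
apply/mapP; exists vec; first by rewrite -chain_excess_eq0 // exc0.
by rewrite -sz_e -(weighted_sum_eq0 sz_e (@allFactors_gt0 vec) fdeg0).
Qed.

Theorem mainTheorem11 (N : nat) (lam : seq int) :
  (1 <= N)%N -> isDomCoweight N lam ->
  (* P_lambda(t) is a well-defined power series with integer coefficients *)
  (forall m : int, exists c : nat, coeffIs N lam m c) /\
  (* ... lying in t^{(N-1)|lambda| - 2 n(lambda)} Z[[t]] *)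
  (forall m : int, m < lowDeg N lam -> coeffIs N lam m 0) /\
  (* ... whose lowest coefficient is dim V^lambda *)
  (exists c : nat, coeffIs N lam (lowDeg N lam) c /\ c%:Q = weylDim lam).
Proof.
case: N => [|n] // _ /andP[/eqP sz_lam sorted_lam].
split; last split.
- move=> m; have [s0 s0_terms] := terms_of_degree_finite m sorted_lam sz_lam.
  exact: coeffIs_exists s0_terms.
- move=> m lt_m; exists [::]; split=> // x; split=> // -[term_x deg_x].
  by have := lowDeg_le_termDeg sorted_lam sz_lam term_x; rewrite deg_x leNgt lt_m.
exists (size (gt_patterns n lam)); split; first exact: coeffIs_lowDeg.
by rewrite -(size_gt_patterns sz_lam sorted_lam) -pmulrn.
Qed.
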